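(* Let $\mathbf{k}$ be a commutative ring, $n\ge0$, $\mathcal{A}=\mathbf{k}[S_n]$. The family $\{\mathbf{B}_{\operatorname{LRM}'(w)}\,w \mid w\in S_n\}$ is a basis of the $\mathbf{k}$-module $\mathcal{A}$.
   Context: $S_n$ is the symmetric group on $[n]=\{1,\dots,n\}$, with product $(uw)(i)=u(w(i))$. $\operatorname{Des}(u)=\{i\in[n-1]:u(i)>u(i+1)\}$; for $I\subseteq[n-1]$, $\mathbf{B}_I=\sum_{u\in S_n,\ \operatorname{Des}(u)\subseteq I}u$. $\operatorname{LRM}(w)=\{i\in[n]: w(k)>i \text{ for all } k<w^{-1}(i)\}$ (left-to-right minima), and $\operatorname{LRM}'(w)=\{\ell-1:\ell\in\operatorname{LRM}(w),\ \ell>1\}\subseteq[n-1]$. *)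

From HB Require Import structures.
From mathcomp Require Import all_boot all_order all_algebra all_fingroup.
Set Implicit Arguments. Unset Strict Implicit. Unset Printing Implicit Defensive.
Import GRing.Theory.
Local Open Scope ring_scope.

(* Permutations of [n] = {1..n} are represented by 'S_n acting on 'I_n = {0..n-1};
   the value of u at position i in {1..n} (paper's 1-based convention) is
   permv u i = (u (i-1)) + 1.  Outside {1..n} it is 0 (never used). *)
Definition permv n (u : 'S_n) (i : nat) : nat :=
  if (0 < i)%N then (if insub i.-1 is Some j then (u j).+1 else 0%N) else 0%N.

(* Paper's product (uw)(i) = u(w(i)); MathComp's (w * u)%g x = u (w x). *)
Definition pmul n (u w : 'S_n) : 'S_n := (w * u)%g.

(* Des(u) \subseteq I, for I a predicate on nat (a subset of [n-1]);
   i : 'I_n with 0 < i ranges exactly over [n-1] = {1..n-1}. *)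
Definition des_sub n (u : 'S_n) (I : pred nat) : bool :=
  [forall i : 'I_n, ((0 < i)%N && (permv u i.+1 < permv u i)%N) ==> I i].

(* Left-to-right minima: LRM(w) = {i in [n] : w(k) > i for all k < w^{-1}(i)}. *)
Definition LRM n (w : 'S_n) : pred nat := fun i =>
  [&& (0 < i)%N, (i <= n)%N &
   [forall k : 'I_n, ((k.+1 < permv (w^-1)%g i)%N) ==> (i < permv w k.+1)%N]].

Definition LRM' n (w : 'S_n) : pred nat := fun i => (0 < i)%N && LRM w i.+1.

(* The group algebra k[S_n], as the free k-module {ffun 'S_n -> k^o}
   (k^o = k viewed as the regular left k-module). *)
Notation galg k n := ({ffun 'S_n -> k^o}) (only parsing).

Definition gelt (k : comPzRingType) n (u : 'S_n) : galg k n :=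
  [ffun g => ((g == u)%:R : k)].

Definition gmul (k : comPzRingType) n (a b : galg k n) : galg k n :=
  [ffun g => \sum_(u : 'S_n) \sum_(v : 'S_n)
               (if pmul u v == g then a u * b v else 0)].

Definition Bsum (k : comPzRingType) n (I : pred nat) : galg k n :=
  \sum_(u : 'S_n | des_sub u I) gelt k u.

Definition is_basis (k : pzRingType) (V : lmodType k) (I : finType)
  (b : I -> V) : Prop :=
  (forall c : I -> k, \sum_(i : I) c i *: b i = 0 -> forall i, c i = 0) /\
  (forall v : V, exists c : I -> k, v = \sum_(i : I) c i *: b i).

(* The coefficient of g in B_{LRM'(w)} w is [Des(g w^-1) \subseteq LRM'(w)], so
   it suffices that the family be unitriangular for the lexicographic order of
   one-line notations, over any ring.  Let g <> w have coefficient 1, let m be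
   the first position where g and w differ, and u = g w^-1.  Then u fixes
   w(1), ..., w(m-1) and every left-to-right-minimum value of w exceeding w(m),
   since such a value must occur before position m.  If u(w(m)) > w(m),
   walk right from w(m): each step either increases u or ends a descent i of u;
   then i+1 is in LRM(w) and exceeds w(m), so it is fixed.  Thus u would map
   every j >= w(m) above w(m), contradicting the pigeonhole principle.  Hence
   u(w(m)) < w(m), i.e. g(m) < w(m). *)

From HB Require Import structures.
From mathcomp Require Import all_boot all_order all_algebra all_fingroup.
Set Implicit Arguments. Unset Strict Implicit. Unset Printing Implicit Defensive.
Import Order.TTheory GRing.Theory.
Local Open Scope ring_scope.

Section Span.
Variables (k : pzRingType) (V : lmodType k) (I : finType) (b : I -> V).

Definition spanned (v : V) : Prop := exists c : I -> k, v = \sum_i c i *: b i.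

Lemma spanned0 : spanned 0.
Proof. by exists (fun=> 0); rewrite big1 // => i _; rewrite scale0r. Qed.

Lemma spannedD u v : spanned u -> spanned v -> spanned (u + v).
Proof.
move=> [c ->] [c' ->]; exists (fun i => c i + c' i).
by rewrite -big_split; apply: eq_bigr => i _; rewrite scalerDl.
Qed.

Lemma spannedZ a v : spanned v -> spanned (a *: v).
Proof.
move=> [c ->]; exists (fun i => a * c i).
by rewrite scaler_sumr; apply: eq_bigr => i _; rewrite scalerA.
Qed.

Lemma spanned_sum (J : finType) (P : pred J) (a : J -> k) (f : J -> V) :
  (forall j, P j -> spanned (f j)) -> spanned (\sum_(j | P j) a j *: f j).
Proof.
move=> Pf; apply: big_ind => //; [exact: spanned0 | exact: spannedD |].
by move=> j /Pf; apply: spannedZ.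
Qed.

Lemma spanned_gen i : spanned (b i).
Proof.
exists (fun j => (j == i)%:R); rewrite (bigD1 i) //= eqxx scale1r big1 ?addr0 //.
by move=> j /negbTE->; rewrite scale0r.
Qed.

End Span.

Lemma lincomb_ffunE (k : pzRingType) (I J : finType) (c : I -> k)
    (f : I -> {ffun J -> k^o}) (x : J) :
  (\sum_i c i *: f i) x = \sum_i c i * f i x.
Proof. by rewrite sum_ffunE; apply: eq_bigr => i _; rewrite ffunE. Qed.

Section Unitriangular.
Variables (k : pzRingType) (I : finType) (d : Order.disp_t) (T : porderType d).
Variables (key : I -> T) (b : I -> {ffun I -> k^o}).
Hypothesis b_diag : forall i, b i i = 1.
Hypothesis b_triangular : forall i j, b i j != 0 -> j != i -> (key j < key i)%O.

Let rank i := #|[set j | (key j < key i)%O]|.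

Let rank_lt i j : (key j < key i)%O -> (rank j < rank i)%N.
Proof.
move=> ji; apply: proper_card; apply/properP; split.
  by apply/subsetP => x; rewrite !inE => /lt_trans; apply.
by exists j; rewrite !inE ?ji ?ltxx.
Qed.

Let delta i : {ffun I -> k^o} := [ffun j => (j == i)%:R].

Let delta_decomp (v : {ffun I -> k^o}) : v = \sum_i v i *: delta i.
Proof.
apply/ffunP => x; rewrite lincomb_ffunE (bigD1 x) //= big1 => [|y yx].
  by rewrite ffunE eqxx mulr1 addr0.
by rewrite ffunE eq_sym (negbTE yx) mulr0.
Qed.

Lemma unitriangular_free (c : I -> k) :
  \sum_i c i *: b i = 0 -> forall i, c i = 0.
Proof.
move=> c_b0 i; apply/eqP; apply: contraT => ci.
have [j cj jmax] := @arg_maxnP _ i (fun j => c j != 0) rank ci.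
have /ffunP/(_ j) := c_b0; rewrite lincomb_ffunE ffunE (bigD1 j) //= big1 => [|l lj].
  by rewrite b_diag mulr1 addr0 => cj0; rewrite cj0 eqxx in cj.
have [->|cl] := eqVneq (c l) 0; first by rewrite mul0r.
have [->|blj] := eqVneq (b l j) 0; first by rewrite mulr0.
move: lj; rewrite eq_sym => /(b_triangular blj)/rank_lt.
by rewrite (leq_gtF (jmax l cl)).
Qed.

Lemma unitriangular_spanning v : spanned b v.
Proof.
have delta_spanned m i : (rank i < m)%N -> spanned b (delta i).
  elim: m i => [//|m IHm] i; rewrite ltnS => rank_i.
  have -> : delta i = b i - \sum_(j | j != i) b i j *: delta j.
    by rewrite {1}(delta_decomp (b i)) (bigD1 i) //= b_diag scale1r addrK.
  rewrite -scaleN1r; apply: spannedD; first exact: spanned_gen.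
  apply: spannedZ; rewrite (bigID (fun j => b i j == 0)) /= big1 ?add0r.
    apply: spanned_sum => j /andP[ji bij]; apply: IHm.
    exact: leq_trans (rank_lt (b_triangular bij ji)) rank_i.
  by move=> j /andP[_ /eqP->]; rewrite scale0r.
rewrite (delta_decomp v); apply: spanned_sum => i _.
exact: delta_spanned _ _ (ltnSn _).
Qed.

Lemma unitriangular_basis : is_basis b.
Proof. by split; [exact: unitriangular_free | exact: unitriangular_spanning]. Qed.

End Unitriangular.

Lemma permv_S n (u : 'S_n) (i : 'I_n) : permv u i.+1 = (u i).+1.
Proof.
rewrite /permv /=; case: insubP => [j _ ji|]; last by rewrite ltn_ord.
by congr (val (u _)).+1; apply: val_inj.
Qed.

Lemma des_sub_descent n (u : 'S_n) (I : pred nat) (i j : 'I_n) :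
  des_sub u I -> j.+1 = i -> (u i < u j)%N -> I i.
Proof.
move=> /forallP/(_ i)/implyP u_des ji uij; apply: u_des.
by rewrite -ji /= permv_S ji permv_S ltnS.
Qed.

Lemma des_sub1 n (I : pred nat) : des_sub (1%g : 'S_n) I.
Proof.
apply/forallP => -[[|j] lt_j_n]; apply/implyP => //=.
rewrite (permv_S 1%g (Ordinal lt_j_n)) (permv_S 1%g (Ordinal (ltnW lt_j_n))).
by rewrite !perm1 /= ltnS ltnNge leqnSn.
Qed.

Lemma LRM'_lt n (w : 'S_n) (s j : 'I_n) :
  LRM' w s -> (j < (w^-1)%g s)%N -> (s < w j)%N.
Proof.
move=> /andP[_ /and3P[_ _ /forallP/(_ j)]].
by rewrite !permv_S !ltnS => /implyP.
Qed.

Lemma perm_exists_ge_le n (u : 'S_n) (v : 'I_n) :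
  exists2 z : 'I_n, (v <= z)%N & (u z <= v)%N.
Proof.
have [/existsP[z /andP[vz uzv]]|/existsPn no_z] :=
  boolP [exists z : 'I_n, (v <= z) && (u z <= v)]%N; first by exists z.
pose A := [set z : 'I_n | (v <= z)%N]; pose B := [set z : 'I_n | (v < z)%N].
have uAB : u @: A \subset B.
  apply/subsetP => y /imsetP[z]; rewrite inE => vz ->.
  by move: (no_z z); rewrite inE vz andTb -ltnNge.
have BA : B \proper A.
  apply/properP; split; first by apply/subsetP => z; rewrite !inE => /ltnW.
  by exists v; rewrite !inE ?leqnn ?ltnn.
have := subset_leq_card uAB; rewrite card_imset; last exact: perm_inj.
by rewrite leqNgt proper_card.
Qed.

Lemma perm_le_of_descents_fixed n (u : 'S_n) (v : 'I_n) :
  (forall z z' : 'I_n, z'.+1 = z -> (v < z)%N -> (u z < u z')%N -> u z = z) ->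
  (u v <= v)%N.
Proof.
move=> desc_fixed; rewrite leqNgt; apply/negP => v_lt_uv.
have above d (z : 'I_n) : val z = (v + d)%N -> (v < u z)%N.
  elim: d z => [|d IHd] z z_eq.
    by have -> : z = v by apply: val_inj; rewrite z_eq addn0.
  have lt_z'_n : (v + d < n)%N by rewrite -addnS -z_eq; exact: ltnW (ltn_ord z).
  have := IHd (Ordinal lt_z'_n) erefl; set z' := Ordinal _ => v_lt_uz'.
  have z'z : z'.+1 = z by rewrite z_eq addnS.
  have v_lt_z : (v < z)%N by rewrite z_eq addnS ltnS leq_addr.
  case: (ltnP (u z) (u z')) => [uz_lt|uz'_le]; first by rewrite (desc_fixed z z').
  apply: ltn_trans v_lt_uz' _; rewrite ltn_neqAle uz'_le andbT.
  by rewrite (inj_eq val_inj) (inj_eq perm_inj) -(inj_eq val_inj) /= -z'z ltn_eqF.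
have [z vz uzv] := perm_exists_ge_le u v.
by have := above (z - v)%N z (esym (subnKC vz)); rewrite ltnNge uzv.
Qed.

Lemma LRM'_above_fixed n (w g : 'S_n) (m : 'I_n) :
    (forall i : 'I_n, (i < m)%N -> g i = w i) ->
  forall s : 'I_n, (w m < s)%N -> LRM' w s -> (w^-1 * g)%g s = s.
Proof.
move=> g_eq_w s wm_lt_s s_LRM; set q := (w^-1)%g s.
have wq : w q = s by rewrite permKV.
case: (ltngtP q m) => [q_lt_m | m_lt_q | /val_inj q_m].
- by rewrite -{1}wq permM permK g_eq_w.
- by have := LRM'_lt s_LRM m_lt_q; rewrite ltnNge ltnW.
- by move: wm_lt_s; rewrite -q_m wq ltnn.
Qed.

Definition oneline n (g : 'S_n) : n.-tuplelexi nat := [tuple val (g i) | i < n].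

Lemma oneline_inj n : injective (@oneline n).
Proof.
move=> g h /(congr1 (fun t => tnth t)) eq_gh; apply/permP => i.
by apply: val_inj; have := congr1 (fun f => f i) eq_gh; rewrite !tnth_mktuple.
Qed.

Lemma oneline_lt_of_des_sub n (w g : 'S_n) :
  des_sub (w^-1 * g)%g (LRM' w) -> g != w -> (oneline g < oneline w)%O.
Proof.
move=> des_u; case: ltgtP => // [w_lt_g | /oneline_inj->]; last by rewrite eqxx.
have [m eq_before] := ltxi_tuplePlt w_lt_g.
rewrite !tnth_mktuple ltEnat /= => wm_lt_gm _.
set u := (w^-1 * g)%g.
have u_wm : u (w m) = g m by rewrite permM permK.
have := @perm_le_of_descents_fixed n u (w m); rewrite u_wm leqNgt wm_lt_gm; apply.
move=> z z' z'z wm_lt_z uz_lt; apply: (LRM'_above_fixed _ wm_lt_z).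
  by move=> i i_lt_m; have := eq_before i i_lt_m; rewrite !tnth_mktuple => /val_inj.
exact: des_sub_descent des_u z'z uz_lt.
Qed.

Lemma BsumE (k : comPzRingType) n (I : pred nat) (u : 'S_n) :
  Bsum k n I u = (des_sub u I)%:R.
Proof.
rewrite /Bsum sum_ffunE big_mkcond (bigD1 u) //= big1 ?addr0 => [|v vu].
  by rewrite ffunE eqxx; case: (des_sub u I).
by rewrite ffunE eq_sym (negbTE vu); case: (des_sub v I).
Qed.

Lemma gmul_gelt (k : comPzRingType) n (a : galg k n) (w g : 'S_n) :
  gmul a (gelt k w) g = a (w^-1 * g)%g.
Proof.
rewrite ffunE (bigD1 (w^-1 * g)%g) //= [X in _ + X]big1 ?addr0 => [|u u_ne].
  rewrite (bigD1 w) //= big1 ?addr0 => [|v vw].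
    by rewrite /pmul mulKVg eqxx ffunE eqxx mulr1.
  by rewrite ffunE (negbTE vw) mulr0 if_same.
apply: big1 => v _; rewrite ffunE.
have [->|_] := eqVneq v w; last by rewrite mulr0 if_same.
by case: eqP => // wu_g; move: u_ne; rewrite -wu_g /pmul mulKg eqxx.
Qed.

Theorem corollary3p6 (k : comPzRingType) (n : nat) :
  is_basis (V := galg k n)
    (fun w : 'S_n => gmul (Bsum k n (LRM' w)) (gelt k w)).
Proof.
apply: (@unitriangular_basis _ _ _ _ (@oneline n)) => [w | w g].
  by rewrite gmul_gelt BsumE mulVg des_sub1.
rewrite gmul_gelt BsumE; case des_u : des_sub; last by rewrite eqxx.
by move=> _ gw; exact: oneline_lt_of_des_sub des_u gw.
Qed.
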